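(* Let $S(p)$ be a projectively non-degenerate oriented polyhedral $2$-surface in $\mathbb{R}^3$ with vertices $p_i$, and let $\omega_{ij}$ be the projective lifting coefficients associated to $S$. Then for every vertex $p_i$ of $S$, \[ \sum_{j:\ p_ip_j\text{ an edge of } S}\omega_{ij}\,dp_i\wedge dp_j=0\quad\text{in }\Lambda^2(\mathbb{R}^3), \] i.e. the projective stress $\Psi_{ij}=\omega_{ij}\,dp_i\wedge dp_j$ on the projective framework in $\mathbb{R}P^2$ with vertices $\hat p_i=[p_i]$ and the edges of $S$ is a self-stress.
   Context: $O$ is the origin of $\mathbb{R}^3$; for $p=(a_1,a_2,a_3)\in\mathbb{R}^3$, $dp=a_1dx_1+a_2dx_2+a_3dx_3$, and $\Lambda^2(\mathbb{R}^3)$ is the space of exterior $2$-forms. $\det(u,v,w)$ is the determinant of the matrix with columns $u,v,w$. For $p_1,\dots,p_4$ with affine spans ${\rm span}(p_1,p_2,p_3)$, ${\rm span}(p_1,p_2,p_4)$ two-dimensional and not containing $O$, set $\omega(p_1,p_2;p_3,p_4)=\det(p_2-p_1,p_3-p_1,p_4-p_1)/(\det(p_1,p_2,p_3)\det(p_1,p_2,p_4))$ (it depends only on $p_1,p_2$ and the two planes). $S(p)$ is projectively non-degenerate if the planes of its faces avoid $O$. For an edge oriented as $\overrightarrow{p_ip_j}$, the orientation of $S$ determines a left and a right adjacent face; with $p_k$ a point of the right face and $p_l$ a point of the left face, both off the edge line, $\omega_{ij}=\omega(p_i,p_j;p_k,p_l)$ (independent of choices and symmetric in $i,j$). *)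

From mathcomp Require Import all_boot all_order all_algebra.
Set Implicit Arguments. Unset Strict Implicit. Unset Printing Implicit Defensive.
Import Order.TTheory GRing.Theory Num.Theory.
Local Open Scope ring_scope.

Definition det3 {R : comRingType} (u v w : 'cV[R]_3) : R :=
  \det (\matrix_(i < 3, j < 3)
          (if j == 0 :> nat then u i 0 else if j == 1 :> nat then v i 0 else w i 0)).

Definition omega_pts {R : fieldType} (p1 p2 p3 p4 : 'cV[R]_3) : R :=
  det3 (p2 - p1) (p3 - p1) (p4 - p1) / (det3 p1 p2 p3 * det3 p1 p2 p4).

(* Exterior 2-forms on R^3 are represented by their (antisymmetric) coefficient
   matrices c, standing for sum_{k<l} c k l dx_k /\ dx_l.
   For p = (a_k), q = (b_k):  dp /\ dq = sum_{k,l} a_k b_l dx_k /\ dx_l,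
   whose coefficient on dx_k /\ dx_l is a_k b_l - a_l b_k. *)
Definition wedge {R : comRingType} (a b : 'cV[R]_3) : 'M[R]_3 :=
  \matrix_(k < 3, l < 3) (a k 0 * b l 0 - a l 0 * b k 0).

Definition on_line {R : ringType} (a b x : 'cV[R]_3) : Prop :=
  exists t : R, x = a + t *: (b - a).

Definition aff_indep {R : ringType} (a b c : 'cV[R]_3) : Prop :=
  forall s t : R, s *: (b - a) + t *: (c - a) = 0 -> s = 0 /\ t = 0.

Definition in_aff_span {R : ringType} (a b c x : 'cV[R]_3) : Prop :=
  exists s t : R, x = a + s *: (b - a) + t *: (c - a).

(* Vertices are indexed by 'I_n; a face is a cyclic sequence of
   vertex indices, its cyclic order giving the orientation.  The directed edge
   i -> j occurs in face F when j is the cyclic successor of i in F; F is then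
   the LEFT face of the oriented edge i -> j, and the face containing j -> i is
   its RIGHT face. *)
Definition dir_edge n (F : seq 'I_n) (i j : 'I_n) : bool :=
  (i \in F) && (next F i == j).

Definition is_edge n (faces : seq (seq 'I_n)) (i j : 'I_n) : bool :=
  has (fun F => dir_edge F i j || dir_edge F j i) faces.

(* link of vertex i: arc from the successor to the predecessor of i in each face *)
Definition link_rel n (faces : seq (seq 'I_n)) (i : 'I_n) : rel 'I_n :=
  fun a b => has (fun F => [&& i \in F, next F i == a & prev F i == b]) faces.

Definition oriented_polyhedral_surface {R : realFieldType} n
    (p : 'I_n -> 'cV[R]_3) (faces : seq (seq 'I_n)) : Prop :=
  [/\ injective p,
      (forall F, F \in faces -> uniq F /\ (3 <= size F)%N),
      (forall F, F \in faces -> exists a b c, [/\ a \in F, b \in F, c \in F,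
          aff_indep (p a) (p b) (p c) &
          forall v, v \in F -> in_aff_span (p a) (p b) (p c) (p v)]),
      (* oriented, without boundary: each directed edge lies in exactly one
         face, and its reverse in exactly one face *)
      (forall i j, has (fun F => dir_edge F i j) faces ->
          count (fun F => dir_edge F i j) faces = 1%N /\
          count (fun F => dir_edge F j i) faces = 1%N) &
      (* the faces around each vertex form a single disk (link is connected) *)
      (forall i a b, is_edge faces i a -> is_edge faces i b ->
          connect (link_rel faces i) a b)].

Definition proj_nondegenerate {R : realFieldType} n
    (p : 'I_n -> 'cV[R]_3) (faces : seq (seq 'I_n)) : Prop :=
  forall F, F \in faces -> forall a b c, a \in F -> b \in F -> c \in F ->
    aff_indep (p a) (p b) (p c) -> ~ in_aff_span (p a) (p b) (p c) 0.

Definition lifting_coeffs {R : realFieldType} n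
    (p : 'I_n -> 'cV[R]_3) (faces : seq (seq 'I_n)) (omega : 'I_n -> 'I_n -> R) : Prop :=
  forall i j, is_edge faces i j ->
    exists k l : 'I_n,
      [/\ has (fun F => dir_edge F j i && (k \in F)) faces,
          has (fun F => dir_edge F i j && (l \in F)) faces,
          ~ on_line (p i) (p j) (p k),
          ~ on_line (p i) (p j) (p l) &
          omega i j = omega_pts (p i) (p j) (p k) (p l)].

From HB Require Import structures.
From mathcomp Require Import all_boot all_order all_algebra ring.
Import GRing.Theory Num.Theory.
Local Open Scope ring_scope.

(* Each face plane avoids O, so it is {x | r_F . x = 1} for a unique covector r_F,
   computable from any three affinely independent vertices of the face.  If the
   oriented edge p_i p_j has right face R and left face L, then
   omega_ij (p_i x p_j) = r_R - r_L, that is omega_ij dp_i /\ dp_j = *r_R - *r_L.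
   Summing over the edges at p_i, every face through p_i occurs once as a right face
   and once as a left face, so the sum vanishes. *)

Lemma ord3P (k : 'I_3) : [\/ k = 0, k = 1 | k = 2].
Proof.
by case: k => [[|[|[|//]]] ?]; [constructor 1 | constructor 2 | constructor 3]; apply: val_inj.
Qed.

Lemma sum_ord2 (V : nmodType) (F : 'I_2 -> V) : \sum_k F k = F 0 + F 1.
Proof. by rewrite !big_ord_recl big_ord0 addr0; congr (_ + F _); apply: val_inj. Qed.

Lemma sum_ord3 (V : nmodType) (F : 'I_3 -> V) : \sum_k F k = F 0 + F 1 + F 2.
Proof.
by rewrite !big_ord_recl big_ord0 addr0 addrA; congr (_ + F _ + F _); apply: val_inj.
Qed.

Section Coordinates.
Context {R : comNzRingType}.
Implicit Types a b c r x : 'cV[R]_3.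

Lemma col3P a b : a 0 0 = b 0 0 -> a 1 0 = b 1 0 -> a 2 0 = b 2 0 -> a = b.
Proof.
by move=> e0 e1 e2; apply/matrixP => k z; rewrite (ord1 z); case: (ord3P k) => ->.
Qed.

Lemma det_mx22 (M : 'M[R]_2) : \det M = M 0 0 * M 1 1 - M 0 1 * M 1 0.
Proof.
rewrite (expand_det_row _ 0) sum_ord2 /cofactor !det_mx11 !mxE.
have [-> ->] : lift 0 0 = 1 :> 'I_2 /\ lift 1 0 = 0 :> 'I_2 by split; apply: val_inj.
by rewrite /= expr0 expr1; ring.
Qed.

Lemma det3E a b c : det3 a b c =
  a 0 0 * (b 1 0 * c 2 0 - b 2 0 * c 1 0) - b 0 0 * (a 1 0 * c 2 0 - a 2 0 * c 1 0)
  + c 0 0 * (a 1 0 * b 2 0 - a 2 0 * b 1 0).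
Proof.
rewrite /det3 (expand_det_row _ 0) sum_ord3 /cofactor !det_mx22 !mxE /=.
have [-> ->] : lift 0 0 = 1 :> 'I_3 /\ lift 0 1 = 2 :> 'I_3 by split; apply: val_inj.
by rewrite !add0n !modn_small // expr0 expr1; ring.
Qed.

Definition dotv r x : R := \sum_k r k 0 * x k 0.

Lemma dotvE r x : dotv r x = r 0 0 * x 0 0 + r 1 0 * x 1 0 + r 2 0 * x 2 0.
Proof. exact: sum_ord3. Qed.

Definition crossv a b : 'cV[R]_3 := \col_k
  [:: a 1 0 * b 2 0 - a 2 0 * b 1 0;
      a 2 0 * b 0 0 - a 0 0 * b 2 0;
      a 0 0 * b 1 0 - a 1 0 * b 0 0]`_k.

(* The 2-form [*r = r_0 dx_1 /\ dx_2 + r_1 dx_2 /\ dx_0 + r_2 dx_0 /\ dx_1], in the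
   coefficient-matrix encoding of [wedge]. *)
Definition hodge r : 'M[R]_3 := \matrix_(k, l) (nth [::]
  [:: [:: 0; r 2 0; - r 1 0]; [:: - r 2 0; 0; r 0 0]; [:: r 1 0; - r 0 0; 0]] k)`_l.

Lemma hodge_is_linear : linear hodge.
Proof.
move=> s r x; apply/matrixP => k l; rewrite !mxE.
by case: (ord3P k) => ->; case: (ord3P l) => -> /=; ring.
Qed.

HB.instance Definition _ := GRing.isLinear.Build R 'cV[R]_3 'M[R]_3 _ hodge hodge_is_linear.

Lemma wedge_crossv a b : wedge a b = hodge (crossv a b).
Proof.
apply/matrixP => k l; rewrite !mxE.
by case: (ord3P k) => ->; case: (ord3P l) => -> /=; ring.
Qed.

Lemma wedgexx a : wedge a a = 0.
Proof. by apply/matrixP => k l; rewrite !mxE mulrC subrr. Qed.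

Lemma cramer3 r a b c :
  det3 a b c *: r = dotv r a *: crossv b c + dotv r b *: crossv c a + dotv r c *: crossv a b.
Proof. by apply: col3P; rewrite !mxE /= !dotvE det3E; ring. Qed.

Lemma crossvBB a b c : crossv (b - a) (c - a) = crossv b c + crossv c a + crossv a b.
Proof. by apply: col3P; rewrite !mxE /=; ring. Qed.

End Coordinates.

Section PlaneCovector.
Context {R : fieldType}.
Implicit Types a b c d r x : 'cV[R]_3.

Definition plane_covector a b c : 'cV[R]_3 := (det3 a b c)^-1 *: crossv (b - a) (c - a).

Lemma plane_covector_dot a b c x :
  det3 a b c != 0 -> in_aff_span a b c x -> dotv (plane_covector a b c) x = 1.
Proof.
move=> D [s [t ->]]; rewrite dotvE !mxE /=.
by move: D; rewrite det3E => D; field.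
Qed.

Lemma plane_covector_unique {r a b c} : det3 a b c != 0 ->
  dotv r a = 1 -> dotv r b = 1 -> dotv r c = 1 -> r = plane_covector a b c.
Proof.
move=> D ra rb rc; rewrite -[r](scalerK D) cramer3 ra rb rc !scale1r.
by rewrite /plane_covector crossvBB.
Qed.

Lemma plane_covectorB a b c d : det3 a b c != 0 -> det3 a b d != 0 ->
  plane_covector a b c - plane_covector a b d = omega_pts a b c d *: crossv a b.
Proof.
rewrite /omega_pts /plane_covector !det3E => Dc Dd.
by apply: col3P; rewrite !mxE /=; field; rewrite Dc Dd.
Qed.

Lemma omega_pts_wedge a b c d : det3 a b c != 0 -> det3 a b d != 0 ->
  omega_pts a b c d *: wedge a b = hodge (plane_covector a b c) - hodge (plane_covector a b d).
Proof. by move=> Dc Dd; rewrite wedge_crossv -linearZ -plane_covectorB // linearB. Qed.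

Lemma aff_indep_not_on_line {a b c} : a != b -> ~ on_line a b c -> aff_indep a b c.
Proof.
move=> neq_ab not_line s t dep.
have [t0 | t_neq0] := eqVneq t 0.
  move/eqP: dep; rewrite t0 scale0r addr0 scaler_eq0 subr_eq0 [b == a]eq_sym.
  by rewrite (negbTE neq_ab) orbF => /eqP.
move/eqP: dep; rewrite addrC addr_eq0 => /eqP tc.
case: not_line; exists (- s / t); apply/eqP; rewrite addrC -subr_eq; apply/eqP.
by apply: (scalerI t_neq0); rewrite tc scalerA mulrCA mulfV // mulr1 scaleNr.
Qed.

Lemma det3_eq0_dependent a b c : det3 a b c = 0 ->
  exists2 f : 'rV[R]_3, f != 0 & f 0 0 *: a + f 0 1 *: b + f 0 2 *: c = 0.
Proof.
move/eqP; rewrite /det3 -det_tr => /det0P [f f_neq0 /rowP fM]; exists f => //.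
by apply: col3P; [move: (fM 0) | move: (fM 1) | move: (fM 2)]; rewrite !mxE sum_ord3 !mxE.
Qed.

Lemma det3_neq0 {a b c} : aff_indep a b c -> ~ in_aff_span a b c 0 -> det3 a b c != 0.
Proof.
move=> indep not_span; apply/eqP => /det3_eq0_dependent [f f_neq0 dep].
have [s0 | s_neq0] := eqVneq (f 0 0 + f 0 1 + f 0 2) 0; last first.
  apply: not_span; exists (f 0 1 / (f 0 0 + f 0 1 + f 0 2)), (f 0 2 / (f 0 0 + f 0 1 + f 0 2)).
  apply: (scalerI s_neq0); rewrite scaler0 -{1}dep.
  by apply: col3P; rewrite !mxE; field.
have f0 : f 0 0 = - f 0 1 - f 0 2 by rewrite -[f 0 0]subr0 -s0; ring.
have [f1 f2] : f 0 1 = 0 /\ f 0 2 = 0.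
  by apply: indep; rewrite -dep; apply: col3P; rewrite !mxE f0; ring.
move/eqP: f_neq0; apply; apply/rowP => k; rewrite mxE.
by case: (ord3P k) => ->; rewrite ?f0 ?f1 ?f2 ?subr0 ?oppr0.
Qed.

End PlaneCovector.

Lemma big_count1 {T : eqType} {V : nmodType} {s : seq T} {P : pred T} {g : T -> V} {x} :
  count P s = 1%N -> x \in s -> P x -> \sum_(y <- s | P y) g y = g x.
Proof.
move=> P1 xs Px; rewrite -big_filter.
have: x \in filter P s by rewrite mem_filter Px.
have := size_filter P s; rewrite P1.
by case: (filter P s) => [|y [|//]] _ //; rewrite inE big_seq1 => /eqP ->.
Qed.

Section DirectedEdges.
Context {n : nat} (faces : seq (seq 'I_n)).

Lemma dir_edge_mem {F : seq 'I_n} {i j} : dir_edge F i j -> i \in F /\ j \in F.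
Proof. by case/andP => iF /eqP <-; rewrite mem_next iF. Qed.

Lemma sum_dir_edges_from (V : nmodType) (f : seq 'I_n -> V) i :
  \sum_(j < n) \sum_(F <- faces | dir_edge F i j) f F = \sum_(F <- faces | i \in F) f F.
Proof.
rewrite (exchange_big_dep xpredT) //= [RHS]big_mkcond /=; apply: eq_bigr => F _.
case: ifP => iF; last by rewrite big_pred0 // => j; rewrite /dir_edge iF.
by rewrite (big_pred1 (next F i)) // => j; rewrite /dir_edge iF eq_sym.
Qed.

Lemma sum_dir_edges_to (V : nmodType) (f : seq 'I_n -> V) i :
  (forall F, F \in faces -> uniq F) ->
  \sum_(j < n) \sum_(F <- faces | dir_edge F j i) f F = \sum_(F <- faces | i \in F) f F.
Proof.
move=> faces_uniq; rewrite (exchange_big_dep xpredT) //= [RHS]big_mkcond /=.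
apply: eq_big_seq => F /faces_uniq uF.
case: ifP => iF.
  rewrite (big_pred1 (prev F i)) // => j /=; apply/idP/eqP => [/andP [_ /eqP <-] | ->].
    by rewrite prev_next.
  by rewrite /dir_edge mem_prev iF next_prev ?eqxx.
rewrite big_pred0 // => j /=; apply/negP => /dir_edge_mem [_].
by rewrite iF.
Qed.

Lemma sum_edges_at_vertex (V : zmodType) (f : seq 'I_n -> V) i :
  (forall F, F \in faces -> uniq F) ->
  \sum_(j < n | is_edge faces i j)
    (\sum_(F <- faces | dir_edge F j i) f F - \sum_(F <- faces | dir_edge F i j) f F) = 0.
Proof.
move=> faces_uniq; rewrite big_mkcond /=.
transitivity (\sum_(j < n)
    (\sum_(F <- faces | dir_edge F j i) f F - \sum_(F <- faces | dir_edge F i j) f F)).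
  apply: eq_bigr => j _; case: ifPn => // not_edge.
  rewrite !big_hasC ?subrr //; apply: contra not_edge => edge;
    by apply: sub_has edge => F /= ->; rewrite ?orbT.
by rewrite sumrB sum_dir_edges_to // sum_dir_edges_from subrr.
Qed.

End DirectedEdges.

Section ProjectiveStress.
Context {R : realFieldType} {n : nat} {p : 'I_n -> 'cV[R]_3} {faces : seq (seq 'I_n)}.
Hypothesis surface : oriented_polyhedral_surface p faces.
Hypothesis nondeg : proj_nondegenerate p faces.

(* Any three vertices of F with [det3 <> 0] determine the plane of F, so which triple
   [pick] returns does not matter. *)
Definition face_covector (F : seq 'I_n) : 'cV[R]_3 :=
  if [pick t : 'I_n * 'I_n * 'I_n | [&& t.1.1 \in F, t.1.2 \in F, t.2 \in F &
        det3 (p t.1.1) (p t.1.2) (p t.2) != 0]] is Some (a, b, c)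
  then plane_covector (p a) (p b) (p c) else 0.

Lemma face_det3_neq0 {F a b c} : F \in faces -> a \in F -> b \in F -> c \in F ->
  aff_indep (p a) (p b) (p c) -> det3 (p a) (p b) (p c) != 0.
Proof.
by move=> HF aF bF cF indep; apply: det3_neq0 indep (nondeg F HF a b c aF bF cF indep).
Qed.

Lemma face_covector_dot {F v} : F \in faces -> v \in F -> dotv (face_covector F) (p v) = 1.
Proof.
move=> HF vF; have [_ _ planar _ _] := surface.
have [a [b [c [aF bF cF indep span]]]] := planar F HF.
have D := face_det3_neq0 HF aF bF cF indep.
have dotF x : x \in F -> dotv (plane_covector (p a) (p b) (p c)) (p x) = 1.
  by move=> xF; apply: plane_covector_dot D (span x xF).
rewrite /face_covector; case: pickP => [[[a' b'] c'] /and4P [a'F b'F c'F D'] | no_triple].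
  by rewrite -(plane_covector_unique D' (dotF a' a'F) (dotF b' b'F) (dotF c' c'F)) dotF.
by have := no_triple (a, b, c); rewrite /= aF bF cF D.
Qed.

Lemma lifting_coeff_wedge {omega i j} : lifting_coeffs p faces omega -> is_edge faces i j ->
  omega i j *: wedge (p i) (p j) =
    \sum_(F <- faces | dir_edge F j i) hodge (face_covector F)
  - \sum_(F <- faces | dir_edge F i j) hodge (face_covector F).
Proof.
move=> lifting edge_ij; have [-> | neq_ij] := eqVneq i j.
  by rewrite wedgexx scaler0 subrr.
have [p_inj _ _ dir_edge_unique _] := surface.
have [k [l [right left not_line_k not_line_l ->]]] := lifting i j edge_ij.
case/hasP: right => FR FR_in /andP [ji_FR kFR].
case/hasP: left => FL FL_in /andP [ij_FL lFL].
have has_ij : has (fun F => dir_edge F i j) faces by apply/hasP; exists FL.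
have [one_left one_right] := dir_edge_unique i j has_ij.
rewrite (big_count1 one_right FR_in ji_FR) (big_count1 one_left FL_in ij_FL).
have [jFR iFR] := dir_edge_mem ji_FR; have [iFL jFL] := dir_edge_mem ij_FL.
have neq_pij : p i != p j by rewrite (inj_eq p_inj).
have DR := face_det3_neq0 FR_in iFR jFR kFR (aff_indep_not_on_line neq_pij not_line_k).
have DL := face_det3_neq0 FL_in iFL jFL lFL (aff_indep_not_on_line neq_pij not_line_l).
rewrite (plane_covector_unique DR (face_covector_dot FR_in iFR) (face_covector_dot FR_in jFR)
           (face_covector_dot FR_in kFR)).
rewrite (plane_covector_unique DL (face_covector_dot FL_in iFL) (face_covector_dot FL_in jFL)
           (face_covector_dot FL_in lFL)).
exact: omega_pts_wedge.
Qed.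

End ProjectiveStress.

Theorem theorem3p5 (R : realFieldType) (n : nat) (p : 'I_n -> 'cV[R]_3)
    (faces : seq (seq 'I_n)) (omega : 'I_n -> 'I_n -> R) :
  oriented_polyhedral_surface p faces ->
  proj_nondegenerate p faces ->
  lifting_coeffs p faces omega ->
  forall i : 'I_n,
    \sum_(j < n | is_edge faces i j) omega i j *: wedge (p i) (p j) = 0.
Proof.
move=> surface nondeg lifting i; have [_ faces_simple _ _ _] := surface.
rewrite (eq_bigr _ (fun j => lifting_coeff_wedge surface nondeg lifting)).
by apply: sum_edges_at_vertex => F /faces_simple [].
Qed.
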